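(* Let $T$ be a reducing triangulation. Any walk in $T$ whose turn sequence has the form $2\,3^*\,2$ contains a $2_r$-turn. Any walk in $T$ whose turn sequence has the form $2\,3^*\,4$ or $4\,3^*\,2$ contains a $2_r$-turn or a $4_r$-turn.
   Context: A triangulation is an embedded graph whose faces are all open disks bounded by three edge-sides. A reducing triangulation $T$ of an oriented surface without boundary is a triangulation in which every vertex has degree at least $8$ and each triangle is colored red or blue so that adjacent triangles have different colors. It may be infinite, for instance when lifted to a covering space together with its colors. Suppose a walk traverses a directed edge $e$ into a vertex $v$ and then leaves $v$ along a directed edge $e'$. This occurrence of $v$ makes a $k$-turn ($k\ge 0$) if exactly $k$ triangles around $v$ lie to the left of the length-two walk $e\,e'$, between $e$ and $e'$ in the cyclic order around $v$. It makes a $-k$-turn ($k\ge 1$) if exactly $k$ triangles lie to its right. A turn is named by an integer in $\{-3,\dots,3\}$ when possible, which is unambiguous since degrees are at least $8$; otherwise it is named by the positive integer. A $k_b$-turn (resp. $k_r$-turn) is a $k$-turn in which the triangle to the left of $e$ is blue (resp. red). The turn sequence of a walk is the sequence of turns made at its interior vertices. Here $3^*$ denotes any number $\ge 0$ of consecutive $3$'s. *)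

From mathcomp Require Import all_boot all_order all_algebra.
Set Implicit Arguments. Unset Strict Implicit. Unset Printing Implicit Defensive.
Import GRing.Theory Num.Theory.

(* A (possibly infinite) triangulation of an oriented surface without boundary,
   encoded as an oriented combinatorial map on a type of darts D:
   - a dart d is an edge-side directed away from its origin vertex;
   - alpha d is the same edge directed the other way (fixed-point-free involution);
   - sigma d is the next dart counterclockwise around the origin of d;
     vertices are the sigma-orbits, the degree is the orbit size;
   - the face to the LEFT of the directed edge d is the triangle at the corner
     between d and sigma d.  Walking the boundary of that face (clockwise)
     is d |-> alpha (sigma d); faces are the orbits of this map.
   - red d : the face to the left of d is red (otherwise blue). *)

Definition face_next (D : Type) (alpha sigma : D -> D) (d : D) : D :=
  alpha (sigma d).

Definition is_reducing_triangulation (D : Type) (alpha sigma : D -> D)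
    (red : D -> bool) : Prop :=
  (forall d, alpha (alpha d) = d) /\
  (forall d, alpha d <> d) /\
      (forall d, exists n, 8 <= n /\ iter n sigma d = d /\
                 (forall j, 0 < j < n -> iter j sigma d <> d)) /\
      (forall d, face_next alpha sigma (face_next alpha sigma (face_next alpha sigma d)) = d
                 /\ face_next alpha sigma d <> d) /\
      (forall d, red (face_next alpha sigma d) = red d) /\
      (forall d, red (alpha d) = ~~ red d).

(* Walk e e' through the vertex v = end of e = origin of e'.
   The number of triangles to the left of e e' is the least k >= 0 with
   sigma^k e' = alpha e (rotating counterclockwise from e' to the reverse of e). *)
Definition left_count (D : Type) (alpha sigma : D -> D) (e e' : D) (k : nat) : Prop :=
  iter k sigma e' = alpha e /\ (forall j, j < k -> iter j sigma e' <> alpha e).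

(* Number of triangles to the right: least k >= 1 with sigma^k (alpha e) = e'. *)
Definition right_count (D : Type) (alpha sigma : D -> D) (e e' : D) (k : nat) : Prop :=
  0 < k /\ iter k sigma (alpha e) = e' /\
  (forall j, 0 < j < k -> iter j sigma (alpha e) <> e').

(* The name of the turn made by e e': an integer in {-3..3} when possible,
   otherwise the positive integer (number of triangles on the left). *)
Definition turn (D : Type) (alpha sigma : D -> D) (e e' : D) (t : int) : Prop :=
  (exists k : nat, t = Posz k /\ k <= 3 /\ left_count alpha sigma e e' k)
  \/ (exists k : nat, t = (- Posz k)%R /\ 0 < k <= 3 /\ right_count alpha sigma e e' k)
  \/ (exists k : nat, t = Posz k /\ 3 < k /\ left_count alpha sigma e e' k /\
        ~ (exists j : nat, 0 < j <= 3 /\ right_count alpha sigma e e' j)).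

(* A walk given by its consecutive directed edges w 0, w 1, ..., w (m+1):
   the end vertex of w i is the origin of w (i+1). *)
Definition is_walk (D : Type) (alpha sigma : D -> D) (w : nat -> D) (m : nat) : Prop :=
  forall i, i <= m -> exists k, iter k sigma (w i.+1) = alpha (w i).

(* The i-th interior vertex (between w i and w (i+1)) makes turn t. *)
Definition turn_at (D : Type) (alpha sigma : D -> D) (w : nat -> D) (i : nat) (t : int)
  : Prop := turn alpha sigma (w i) (w i.+1) t.

(* A k_r-turn: a k-turn whose triangle to the left of the incoming edge is red. *)
Definition red_turn_at (D : Type) (alpha sigma : D -> D) (red : D -> bool)
    (w : nat -> D) (i : nat) (t : int) : Prop :=
  turn_at alpha sigma w i t /\ red (w i).

From mathcomp Require Import all_boot all_order all_algebra.

(* Around a vertex the triangles alternate in colour, so a turn with [k]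
   triangles on its left changes the colour of the triangle to the left of the
   walk iff [k] is even.  Hence the even first turn flips that colour and the
   [3]-turns keep it: the triangles to the left of the walk at its first and at
   its last turn have opposite colours, and the red one of them makes the
   required [2_r] or [4_r] turn. *)

Lemma turn_left_count (D : Type) (alpha sigma : D -> D) (e e' : D) (k : nat) :
  turn alpha sigma e e' (Posz k) -> left_count alpha sigma e e' k.
Proof.
case=> [[_ [[<-] [_ lc]]] // | [[[|j] [_ []]] // | [_ [[<-] [_ [lc _]]]] //]].
Qed.

Section Colouring.
Variables (D : Type) (alpha sigma : D -> D) (red : D -> bool).
Hypothesis red_face : forall d, red (face_next alpha sigma d) = red d.
Hypothesis red_alpha : forall d, red (alpha d) = ~~ red d.

Lemma red_sigma (d : D) : red (sigma d) = ~~ red d.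
Proof. by rewrite -(red_face d) /face_next red_alpha negbK. Qed.

Lemma red_iter_sigma (k : nat) (d : D) : red (iter k sigma d) = red d (+) odd k.
Proof.
elim: k => [|k IHk] /=; first by rewrite addbF.
by rewrite red_sigma IHk addbN.
Qed.

Lemma red_turn {e e' : D} {k : nat} :
  turn alpha sigma e e' (Posz k) -> red e' = red e (+) ~~ odd k.
Proof.
move=> /(@turn_left_count D alpha sigma) [sigma_e' _].
have := red_alpha e; rewrite -sigma_e' red_iter_sigma.
by case: (red e') (red e) (odd k) => [] [] [].
Qed.

Variables (w : nat -> D) (m : nat).
Hypothesis turns3 : forall i, 0 < i < m -> turn_at alpha sigma w i (Posz 3).

Lemma red_along_turns3 (j : nat) : 0 < j <= m -> red (w j) = red (w 1).
Proof.
elim: j => [|[|j] IHj] // j_range.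
by rewrite (red_turn (turns3 j.+1 j_range)) addbF IHj //; exact: ltnW.
Qed.

Lemma red_last_even_first (k : nat) : 0 < m ->
  turn_at alpha sigma w 0 (Posz k) -> ~~ odd k -> red (w m) = ~~ red (w 0).
Proof.
move=> m_gt0 turn0 even_k.
by rewrite (red_along_turns3 m) ?m_gt0 ?leqnn // (red_turn turn0) (negbTE even_k) addbT.
Qed.

Lemma red_first_or_last_turn (a b : nat) : 0 < m ->
  turn_at alpha sigma w 0 (Posz a) -> turn_at alpha sigma w m (Posz b) ->
  ~~ odd a ->
  red_turn_at alpha sigma red w 0 (Posz a) \/ red_turn_at alpha sigma red w m (Posz b).
Proof.
move=> m_gt0 turn0 turnm even_a.
have red_m := red_last_even_first a m_gt0 turn0 even_a.
by case red0: (red (w 0)); [left | right; rewrite /red_turn_at red_m red0].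
Qed.

End Colouring.

Theorem lemma3p3 (D : Type) (alpha sigma : D -> D) (red : D -> bool) :
  is_reducing_triangulation alpha sigma red ->
  (forall (w : nat -> D) (m : nat),
     0 < m -> is_walk alpha sigma w m ->
     turn_at alpha sigma w 0 (Posz 2) ->
     (forall i, 0 < i < m -> turn_at alpha sigma w i (Posz 3)) ->
     turn_at alpha sigma w m (Posz 2) ->
     exists i, i <= m /\ red_turn_at alpha sigma red w i (Posz 2)) /\
  (forall (w : nat -> D) (m : nat),
     0 < m -> is_walk alpha sigma w m ->
     ((turn_at alpha sigma w 0 (Posz 2) /\ turn_at alpha sigma w m (Posz 4)) \/
      (turn_at alpha sigma w 0 (Posz 4) /\ turn_at alpha sigma w m (Posz 2))) ->
     (forall i, 0 < i < m -> turn_at alpha sigma w i (Posz 3)) ->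
     exists i, i <= m /\
       (red_turn_at alpha sigma red w i (Posz 2) \/ red_turn_at alpha sigma red w i (Posz 4))).
Proof.
case=> _ [_ [_ [_ [red_face red_alpha]]]].
have ends := red_first_or_last_turn _ _ _ _ red_face red_alpha.
split=> [w m m_gt0 _ turn0 turns3 turnm | w m m_gt0 _ [[turn0 turnm] | [turn0 turnm]] turns3].
- by case: (ends w m turns3 2 2 m_gt0 turn0 turnm isT); [exists 0 | exists m].
- by case: (ends w m turns3 2 4 m_gt0 turn0 turnm isT); [exists 0 | exists m]; auto.
- by case: (ends w m turns3 4 2 m_gt0 turn0 turnm isT); [exists 0 | exists m]; auto.
Qed.
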